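(* Let $\mathcal{H}\in\mathbb{R}_D^{[n_1,\ldots,n_m]}$. Then $\mathcal{H}$ is $\mathbb{R}$-psd if and only if $\mathcal{H}$ is $\mathbb{C}$-psd.
   Context: For vectors $v_i$, $[v_1,\ldots,v_m]_{\otimes h}:=v_1\otimes\cdots\otimes v_m\otimes\overline{v_1}\otimes\cdots\otimes\overline{v_m}$. $\mathbb{R}_D^{[n_1,\ldots,n_m]}$ is the set of real tensors of the form $\sum_i\lambda_i[u_i^1,\ldots,u_i^m]_{\otimes h}$ with $\lambda_i\in\mathbb{R}$ and $u_i^j\in\mathbb{R}^{n_j}$. For a Hermitian tensor $\mathcal{H}$ (i.e. $\mathcal{H}_{i_1\ldots i_m j_1\ldots j_m}=\overline{\mathcal{H}_{j_1\ldots j_m i_1\ldots i_m}}$) and $x=(x_1,\ldots,x_m)$, $\mathcal{H}(x,\overline{x}):=\langle\mathcal{H},[x_1,\ldots,x_m]_{\otimes h}\rangle$ with $\langle\mathcal{A},\mathcal{B}\rangle=\sum\mathcal{A}_{\cdot}\overline{\mathcal{B}_{\cdot}}$. $\mathcal{H}$ is $\mathbb{R}$-psd if $\mathcal{H}(x,\overline{x})\ge0$ for all real $x_i\in\mathbb{R}^{n_i}$, and $\mathbb{C}$-psd if $\mathcal{H}(x,\overline{x})\ge0$ for all complex $x_i\in\mathbb{C}^{n_i}$. *)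

From HB Require Import structures.
From mathcomp Require Import all_boot all_order all_algebra.
From mathcomp Require Import complex.
Set Implicit Arguments. Unset Strict Implicit. Unset Printing Implicit Defensive.
Import Order.TTheory GRing.Theory Num.Theory.
Local Open Scope ring_scope.

(* A Hermitian-shaped tensor of order 2m with dimensions
   [n_1,...,n_m,n_1,...,n_m] is a function H : idx n -> idx n -> R[i],
   H i j = H_{i_1..i_m j_1..j_m}. *)

Definition idx (m : nat) (n : 'I_m -> nat) := {dffun forall k : 'I_m, 'I_(n k)}.

Definition ctensor (R : rcfType) (m : nat) (n : 'I_m -> nat) :=
  idx n -> idx n -> R[i].

Definition cvecs (R : rcfType) (m : nat) (n : 'I_m -> nat) :=
  forall k : 'I_m, 'I_(n k) -> R[i].
Definition rvecs (R : rcfType) (m : nat) (n : 'I_m -> nat) :=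
  forall k : 'I_m, 'I_(n k) -> R.

Definition cvec_of (R : rcfType) m (n : 'I_m -> nat) (u : rvecs R n) : cvecs R n :=
  fun k i => (u k i)%:C%C.

Definition htens (R : rcfType) m (n : 'I_m -> nat) (x : cvecs R n) : ctensor R n :=
  fun i j => (\prod_(k < m) x k (i k)) * (\prod_(k < m) conjc (x k (j k))).

Definition tinner (R : rcfType) m (n : 'I_m -> nat) (A B : ctensor R n) : R[i] :=
  \sum_(i : idx n) \sum_(j : idx n) A i j * conjc (B i j).

Definition heval (R : rcfType) m (n : 'I_m -> nat) (H : ctensor R n) (x : cvecs R n) :=
  tinner H (htens x).

Definition hermitian (R : rcfType) m (n : 'I_m -> nat) (H : ctensor R n) :=
  forall i j, H i j = conjc (H j i).

Definition in_RD (R : rcfType) m (n : 'I_m -> nat) (H : ctensor R n) :=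
  exists s : seq (R * rvecs R n),
    forall i j, H i j = \sum_(p <- s) (p.1)%:C%C * htens (cvec_of p.2) i j.

Definition R_psd (R : rcfType) m (n : 'I_m -> nat) (H : ctensor R n) :=
  forall u : rvecs R n, 0 <= heval H (cvec_of u).

Definition C_psd (R : rcfType) m (n : 'I_m -> nat) (H : ctensor R n) :=
  forall x : cvecs R n, 0 <= heval H x.

From HB Require Import structures.
From mathcomp Require Import all_boot all_order all_algebra.
From mathcomp Require Import complex ring.
Set Implicit Arguments. Unset Strict Implicit. Unset Printing Implicit Defensive.
Import Order.TTheory GRing.Theory Num.Theory.
Local Open Scope ring_scope.

(* A tensor of R_D is a real combination of tensors [u_1,...,u_m]_h with real
   u_k, and [u]_h(x, conj x) = prod_k |<u_k, x_k>|^2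
   = prod_k (<u_k, Re x_k>^2 + <u_k, Im x_k>^2).  Expanding the product, H(x, conj x)
   is the sum, over the 2^m ways of choosing Re x_k or Im x_k for each k, of H
   evaluated at the chosen real vectors, and each term is nonnegative when H is
   R-psd. *)

Lemma sum_dffun_prod (R : comPzSemiRingType) (I : finType) (T_ : I -> finType)
    (F : forall i, T_ i -> R) :
  \sum_(f : {dffun forall i, T_ i}) \prod_i F i (f i) = \prod_i \sum_(t : T_ i) F i t.
Proof.
rewrite (reindex (@dffun_of_fprod _ T_)) /=; last exact/onW_bij/dffun_of_fprod_bij.
pose P i : {ffun T_ i -> R} := [ffun t => F i t].
transitivity (\sum_(f : fprod T_) \prod_(i in I) P i (f i)).
  by apply: eq_bigr => f _; apply: eq_bigr => i _; rewrite !ffunE.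
rewrite big_fprod -(bigA_distr_big_dep _ (fun i => untag 0 (P i))).
apply: eq_bigr => i _; rewrite -(big_tag P).
by apply: eq_bigr => t _; rewrite ffunE.
Qed.

Lemma mul_conjc_Re2_Im2 (R : rcfType) (z : R[i]) :
  (z^* * z)%C = ((complex.Re z) ^+ 2 + (complex.Im z) ^+ 2)%:C%C.
Proof.
case: z => a b; apply/eqP; rewrite eq_complex /= !expr2.
apply/andP; split; apply/eqP; ring.
Qed.

Section RealRankOne.
Variables (R : rcfType) (m : nat) (n : 'I_m -> nat).

Definition rdot (u v : rvecs R n) (k : 'I_m) : R := \sum_(j < n k) u k j * v k j.

Definition cdot (u : rvecs R n) (x : cvecs R n) (k : 'I_m) : R[i] :=
  \sum_(j < n k) (u k j)%:C%C * x k j.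

Definition re_vecs (x : cvecs R n) : rvecs R n := fun k j => complex.Re (x k j).
Definition im_vecs (x : cvecs R n) : rvecs R n := fun k j => complex.Im (x k j).

Definition select_re_im (x : cvecs R n) (f : {ffun 'I_m -> bool}) : rvecs R n :=
  fun k j => if f k then complex.Re (x k j) else complex.Im (x k j).

Lemma Re_cdot u x k : complex.Re (cdot u x k) = rdot u (re_vecs x) k.
Proof.
rewrite (raddf_sum (@complex.Re R : Rcomplex R -> R)).
by apply: eq_bigr => j _; rewrite /re_vecs; case: (x k j) => a b /=; rewrite mul0r subr0.
Qed.

Lemma Im_cdot u x k : complex.Im (cdot u x k) = rdot u (im_vecs x) k.
Proof.
rewrite (raddf_sum (@complex.Im R : Rcomplex R -> R)).
by apply: eq_bigr => j _; rewrite /im_vecs; case: (x k j) => a b /=; rewrite mul0r addr0.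
Qed.

Lemma heval_htens u x :
  heval (htens (cvec_of u)) x = \prod_(k < m) ((cdot u x k)^* * cdot u x k)%C.
Proof.
rewrite /heval /tinner /htens.
transitivity (\sum_(i : idx n) \sum_(j : idx n)
   ((\prod_(k < m) ((u k (i k))%:C * (x k (i k))^*)) *
    (\prod_(k < m) ((u k (j k))%:C * x k (j k))))%C).
  apply: eq_bigr => i _; apply: eq_bigr => j _.
  (* Stated with a syntactic [conjc] head, which [conjc_real] and [conjcK] need. *)
  have conjc_prod (F : 'I_m -> R[i]) : (\prod_(k < m) F k)^*%C = \prod_(k < m) (F k)^*%C.
    exact: rmorph_prod.
  have conjcM (a b : R[i]) : (a * b)^*%C = a^*%C * b^*%C by exact: rmorphM.
  rewrite /cvec_of conjcM !conjc_prod.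
  under [X in _ * X * _]eq_bigr do rewrite conjc_real.
  under [X in _ * (_ * X)]eq_bigr do rewrite conjcK.
  by rewrite !big_split /= mulrACA.
rewrite -big_distrlr /= (sum_dffun_prod (fun k j => (u k j)%:C * (x k j)^*)%C).
rewrite (sum_dffun_prod (fun k j => (u k j)%:C * x k j)%C) -big_split /=.
apply: eq_bigr => k _; congr (_ * _).
rewrite rmorph_sum; apply: eq_bigr => j _; rewrite rmorphM.
by congr (_ * _); exact/esym/conjc_real.
Qed.

Lemma heval_htens_re_im u x :
  heval (htens (cvec_of u)) x =
  \prod_(k < m) ((rdot u (re_vecs x) k) ^+ 2 + (rdot u (im_vecs x) k) ^+ 2)%:C%C.
Proof.
rewrite heval_htens; apply: eq_bigr => k _.
by rewrite mul_conjc_Re2_Im2 Re_cdot Im_cdot.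
Qed.

Lemma heval_htens_real u v :
  heval (htens (cvec_of u)) (cvec_of v) = \prod_(k < m) ((rdot u v k) ^+ 2)%:C%C.
Proof.
rewrite heval_htens_re_im; apply: eq_bigr => k _.
by rewrite [rdot u (im_vecs _) k]big1 ?expr0n ?addr0 // => j _; rewrite mulr0.
Qed.

Lemma heval_htens_select u x :
  heval (htens (cvec_of u)) x =
  \sum_(f : {ffun 'I_m -> bool}) heval (htens (cvec_of u)) (cvec_of (select_re_im x f)).
Proof.
pose sq k (b : bool) :=
  ((if b then rdot u (re_vecs x) k else rdot u (im_vecs x) k) ^+ 2)%:C%C.
rewrite heval_htens_re_im.
transitivity (\prod_(k < m) \sum_(b : bool) sq k b).
  by apply: eq_bigr => k _; rewrite big_bool raddfD.
rewrite bigA_distr_bigA /=; apply: eq_bigr => f _.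
rewrite heval_htens_real; apply: eq_bigr => k _.
by rewrite /sq /rdot /select_re_im; case: (f k).
Qed.

Lemma heval_sum (T : Type) (s : seq T) (c : T -> R[i]) (A : T -> ctensor R n)
    (H : ctensor R n) x :
  (forall i j, H i j = \sum_(p <- s) c p * A p i j) ->
  heval H x = \sum_(p <- s) c p * heval (A p) x.
Proof.
move=> defH; rewrite /heval /tinner.
under eq_bigr do under eq_bigr do rewrite defH big_distrl /=.
under eq_bigr do rewrite exchange_big /=.
rewrite exchange_big /=; apply: eq_bigr => p _.
rewrite mulr_sumr; apply: eq_bigr => i _.
by rewrite mulr_sumr; apply: eq_bigr => j _; rewrite mulrA.
Qed.

Lemma heval_RD_select (H : ctensor R n) x :
  in_RD H ->
  heval H x = \sum_(f : {ffun 'I_m -> bool}) heval H (cvec_of (select_re_im x f)).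
Proof.
move=> [s defH]; rewrite (heval_sum _ defH).
under [RHS]eq_bigr do rewrite (heval_sum _ defH).
rewrite exchange_big /=; apply: eq_bigr => p _.
by rewrite -mulr_sumr heval_htens_select.
Qed.

End RealRankOne.

Theorem proposition5p3 (R : rcfType) (m : nat) (n : 'I_m -> nat)
    (H : ctensor R n) :
  in_RD H -> (R_psd H <-> C_psd H).
Proof.
move=> H_RD; split=> [H_Rpsd x | H_Cpsd u]; last exact: H_Cpsd.
by rewrite (heval_RD_select x H_RD); apply: sumr_ge0 => f _; apply: H_Rpsd.
Qed.
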